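(* Assume the standing hypotheses described in the context and that $\ell_1(x,\cdot)$ is positively $1$-homogeneous for every $x$ (so that $\ell^e(x,w^0,w,a)=\ell_0(x,a)w^0+\ell_1(x,w)$). Let $(\bar S,\bar w^0,\bar w,\bar\alpha,\bar y^0,\bar y,\bar\beta)$ be a canonical extremal with multiplier $(p_0,p,\pi,\lambda)$. Then there is a zero-measure set $\mathcal N\subset[0,\bar S]$ such that for every $s\in[0,\bar S]\setminus\mathcal N$: $H(\bar y(s),p_0,p(s),\pi,\lambda,\bar w^0(s),\bar w(s),\bar\alpha(s))=\mathbf H(\bar y(s),p_0,p(s),\pi,\lambda)=\max\{\mathbf H^{(dr)}(\bar y(s),p_0,p(s),\lambda),\mathbf H^{(imp)}(\bar y(s),p(s),\pi,\lambda)\}=0$; $\bar w^0(s)\big[p_0+p(s)\cdot f(\bar y(s),\bar\alpha(s))-\lambda\ell_0(\bar y(s),\bar\alpha(s))\big]=0$; $p(s)\cdot\sum_{i=1}^m g_i(\bar y(s))\bar w^i(s)+\pi|\bar w(s)|-\lambda\ell_1(\bar y(s),\bar w(s))=0$. In particular, for $s\in[0,\bar S]\setminus\mathcal N$: (i) if $\mathbf H^{(dr)}(\bar y(s),p_0,p(s),\lambda)<0$, then $\bar w^0(s)=0$ and $p(s)\cdot\sum_{i=1}^m g_i(\bar y(s))\bar w^i(s)+\pi-\lambda\ell_1(\bar y(s),\bar w(s))=\mathbf H^{(imp)}(\bar y(s),p(s),\pi,\lambda)=0$; (ii) if $\mathbf H^{(imp)}(\bar y(s),p(s),\pi,\lambda)<0$,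 then $\bar w(s)=0$ and $p_0+p(s)\cdot f(\bar y(s),\bar\alpha(s))-\lambda\ell_0(\bar y(s),\bar\alpha(s))=\mathbf H^{(dr)}(\bar y(s),p_0,p(s),\lambda)=0$.
   Context: Let $n,m,q\ge1$, $m=m_1+m_2$. Standing hypotheses: $\mathfrak T\subset\mathbb{R}_+\times\mathbb{R}^n$ closed target; $A\subset\mathbb{R}^q$ compact; $\mathcal C=\mathcal C_1\times\mathcal C_2\subseteq\mathbb{R}^m$ with $\mathcal C_1\subseteq\mathbb{R}^{m_1}$ a closed cone containing the lines $\mathbb{R}\mathbf e_i$, $i\le m_1$, and $\mathcal C_2\subseteq\mathbb{R}^{m_2}$ a closed cone containing no line; $f:\mathbb{R}^n\times A\to\mathbb{R}^n$ continuous with continuous $x$-partials; $g_1,\dots,g_m$ of class $C^1$; $\ell(x,u,a)=\ell_0(x,a)+\ell_1(x,u)$ with $\ell_0$ and the recession function $\hat\ell_1(x,w^0,w):=\lim_{r\to w^0}r\ell_1(x,w/r)$ continuous with continuous $x$-partials; $\Psi:\mathbb{R}\times\mathbb{R}^n\to\mathbb{R}$ of class $C^1$; $K\in(0,+\infty]$, $\check x\in\mathbb{R}^n$; $\ell^e(x,w^0,w,a):=\ell_0(x,a)w^0+\hat\ell_1(x,w^0,w)$. A space-time process is $(S,w^0,w,\alpha,y^0,y,\beta)$ with $S>0$, $(w^0,w,\alpha)\in L^\infty([0,S],\mathbb{R}_+\times\mathcal C\times A)$, $\operatorname{ess\,inf}(w^0+|w|)>0$, and $(y^0,y,\beta)$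 solving $\dot y^0=w^0$, $\dot y=f(y,\alpha)w^0+\sum_i g_i(y)w^i$, $\dot\beta=|w|$, $(y^0,y,\beta)(0)=(0,\check x,0)$; it is canonical if $w^0+|w|=1$ a.e. Hamiltonians: $W=\{(w^0,w)\in\mathbb{R}_+\times\mathcal C:w^0+|w|=1\}$; $H(x,p_0,p,\pi,\lambda,w^0,w,a)=p_0w^0+p\cdot(f(x,a)w^0+\sum_i g_i(x)w^i)+\pi|w|-\lambda\ell^e(x,w^0,w,a)$; $\mathbf H=\max_{W\times A}H$; $\mathbf H^{(dr)}(x,p_0,p,\lambda):=\max_{a\in A}\{p_0+p\cdot f(x,a)-\lambda\ell_0(x,a)\}$; $\mathbf H^{(imp)}(x,p,\pi,\lambda):=\max_{w\in\mathcal C,|w|=1}\{p\cdot\sum_i g_i(x)w^i+\pi-\lambda\ell_1(x,w)\}$. Extremal: a space-time process $(\bar S,\bar w^0,\bar w,\bar\alpha,\bar y^0,\bar y,\bar\beta)$ together with (for some Boltyanski approximating cone $\Gamma$ of $\mathfrak T$ at $(\bar y^0,\bar y)(\bar S)$) a multiplier $(p_0,p,\pi,\lambda)\in\mathbb{R}\times AC([0,\bar S],\mathbb{R}^n)\times(-\infty,0]\times[0,\infty)$ satisfying: $(p_0,p,\lambda)\ne(0,0,0)$; $(p_0,p(\bar S))\in-\lambda\nabla_{(t,x)}\Psi((\bar y^0,\bar y)(\bar S))-\Gamma^\perp$, with $\pi=0$ if $\bar\beta(\bar S)<K$; $\dot p=-\partial_xH(\bar y,p_0,p,\pi,\lambda,\bar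 w^0,\bar w,\bar\alpha)$ a.e.; $H(\bar y,p_0,p,\pi,\lambda,\bar w^0,\bar w,\bar\alpha)=\mathbf H(\bar y,p_0,p,\pi,\lambda)$ a.e.; and $\mathbf H(\bar y(s),p_0,p(s),\pi,\lambda)=0$ for all $s\in[0,\bar S]$. (A Boltyanski approximating cone of $Z\subseteq\mathbb{R}^N$ at $z$ is a convex cone $LC$, where $C\subset\mathbb{R}^M$ is a convex cone, $L$ linear, and there is a continuous $F:V\cap C\to Z$, $V$ a neighborhood of $0$, with $F(v)=z+Lv+o(|v|)$; $X^\perp=\{p:p\cdot x\le0\ \forall x\in X\}$.) *)

From HB Require Import structures.
From mathcomp Require Import all_boot all_order all_algebra.
From mathcomp Require Import all_classical all_reals all_analysis.
Set Implicit Arguments. Unset Strict Implicit. Unset Printing Implicit Defensive.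
Import Order.TTheory GRing.Theory Num.Theory numFieldNormedType.Exports.
Local Open Scope classical_set_scope.
Local Open Scope ring_scope.

Section Defs.
Variable R : realType.

Definition evec (k : nat) (j : 'I_k) : 'rV[R]_k := delta_mx 0 j.

Definition dotp (k : nat) (u v : 'rV[R]_k) : R := \sum_(i < k) u 0 i * v 0 i.
Definition enorm (k : nat) (v : 'rV[R]_k) : R := Num.sqrt (dotp v v).

(* the point (t,x) of R x R^n, coded as a row vector of R^(1+n) *)
Definition pack (n : nat) (t : R) (x : 'rV[R]_n) : 'rV[R]_(1 + n) :=
  row_mx (t%:M) x.

Definition is_cone (k : nat) (K : set 'rV[R]_k) : Prop :=
  K 0 /\ forall r v, 0 <= r -> K v -> K (r *: v).
Definition is_convex_cone (k : nat) (K : set 'rV[R]_k) : Prop :=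
  is_cone K /\ forall u v, K u -> K v -> K (u + v).

Definition C1fun (k : nat) (W : normedModType R) (h : 'rV[R]_k -> W) : Prop :=
  forall j : 'I_k, (forall x, derivable h x (evec j)) /\
    continuous (fun x => 'D_(evec j) h x).

Definition cont_xpartials (k : nat) (Y : topologicalType) (W : normedModType R)
  (D : set ('rV[R]_k * Y)) (h : 'rV[R]_k -> Y -> W) : Prop :=
  forall j : 'I_k, (forall z, D z -> derivable (h^~ z.2) z.1 (evec j)) /\
    {within D, continuous (fun z => 'D_(evec j) (h^~ z.2) z.1)}.

Definition grad (k : nat) (h : 'rV[R]_k -> R) (x : 'rV[R]_k) : 'rV[R]_k :=
  \row_(j < k) 'D_(evec j) h x.

Definition polar (k : nat) (X : set 'rV[R]_k) : set 'rV[R]_k :=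
  [set p | forall x, X x -> dotp p x <= 0].

Definition boltyanski_cone (N : nat) (Z : set 'rV[R]_N) (z : 'rV[R]_N)
  (G : set 'rV[R]_N) : Prop :=
  exists (M : nat) (Cc : set 'rV[R]_M) (L : 'M[R]_(M, N)) (V : set 'rV[R]_M)
         (F : 'rV[R]_M -> 'rV[R]_N),
    [/\ is_convex_cone Cc, G = [set v *m L | v in Cc], is_convex_cone G,
        nbhs (0 : 'rV[R]_M) V &
     [/\ {within V `&` Cc, continuous F},
         (forall v, V v -> Cc v -> Z (F v)) &
         forall eps : R, 0 < eps -> exists2 delta : R, 0 < delta &
           forall v, V v -> Cc v -> `|v| < delta ->
             `|F v - z - v *m L| <= eps * `|v| ]].

Definition leb_null (N : set R) : Prop :=
  measurable N /\ (@lebesgue_measure R) N = 0%E.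
Definition ae_on (S : R) (P : R -> Prop) : Prop :=
  exists N, leb_null N /\ forall s, `[0, S]%classic s -> ~ N s -> P s.

Definition abs_cont (V : normedModType R) (S : R) (u : R -> V) : Prop :=
  forall eps : R, 0 < eps -> exists2 delta : R, 0 < delta &
    forall (k : nat) (a b : 'I_k -> R),
      (forall i, 0 <= a i /\ a i <= b i /\ b i <= S) ->
      (forall i j, i != j -> b i <= a j \/ b j <= a i) ->
      \sum_(i < k) (b i - a i) < delta ->
      \sum_(i < k) `|u (b i) - u (a i)| < eps.

Definition AC_sol (V : normedModType R) (S : R) (u du : R -> V) : Prop :=
  abs_cont S u /\ ae_on S (fun s => 0 < s < S /\ is_derive s 1 u (du s)).

Definition ess_bounded (V : normedModType R) (S : R) (u : R -> V) : Prop :=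
  exists M : R, ae_on S (fun s => `|u s| <= M).

Definition meas_vec (k : nat) (S : R) (u : R -> 'rV[R]_k) : Prop :=
  forall i : 'I_k, measurable_fun `[0, S]%classic (fun s => u s 0 i).

End Defs.

Section Hamiltonians.
Variables (R : realType) (n m1 m2 q : nat).
Local Notation m := (m1 + m2)%N.
Variables (C1 : set 'rV[R]_m1) (C2 : set 'rV[R]_m2) (A : set 'rV[R]_q).
Variables (f : 'rV[R]_n -> 'rV[R]_q -> 'rV[R]_n) (g : 'I_m -> 'rV[R]_n -> 'rV[R]_n)
  (l0 : 'rV[R]_n -> 'rV[R]_q -> R) (l1 : 'rV[R]_n -> 'rV[R]_m -> R)
  (l1hat : 'rV[R]_n -> R -> 'rV[R]_m -> R).

Definition Ccone : set 'rV[R]_m := [set w | C1 (lsubmx w) /\ C2 (rsubmx w)].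

Definition gsum (x : 'rV[R]_n) (w : 'rV[R]_m) : 'rV[R]_n :=
  \sum_(i < m) w 0 i *: g i x.

Definition le (x : 'rV[R]_n) (w0 : R) (w : 'rV[R]_m) (a : 'rV[R]_q) : R :=
  l0 x a * w0 + l1hat x w0 w.

Definition Hfun (x : 'rV[R]_n) (p0 : R) (p : 'rV[R]_n) (pi lam w0 : R)
  (w : 'rV[R]_m) (a : 'rV[R]_q) : R :=
  p0 * w0 + dotp p (w0 *: f x a + gsum x w) + pi * enorm w - lam * le x w0 w a.

Definition Wset : set (R * 'rV[R]_m) :=
  [set z | 0 <= z.1 /\ Ccone z.2 /\ z.1 + enorm z.2 = 1].

Definition Hmax (x : 'rV[R]_n) (p0 : R) (p : 'rV[R]_n) (pi lam : R) : R :=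
  sup [set h | exists z a, Wset z /\ A a /\ h = Hfun x p0 p pi lam z.1 z.2 a].

Definition Hdr (x : 'rV[R]_n) (p0 : R) (p : 'rV[R]_n) (lam : R) : R :=
  sup [set h | exists a, A a /\ h = p0 + dotp p (f x a) - lam * l0 x a].

Definition Himp (x : 'rV[R]_n) (p : 'rV[R]_n) (pi lam : R) : R :=
  sup [set h | exists w, Ccone w /\ enorm w = 1 /\
                 h = dotp p (gsum x w) + pi - lam * l1 x w].

(* canonical extremal (S,w0,w,alpha,y0,y,beta) with multiplier (p0,p,pi,lam),
   for target T, cost Psi, bound K and initial point xc *)
Definition canonical_extremal (T : set 'rV[R]_(1 + n)) (Psi : 'rV[R]_(1 + n) -> R)
  (K : \bar R) (xc : 'rV[R]_n)
  (S : R) (w0 : R -> R) (w : R -> 'rV[R]_m) (alpha : R -> 'rV[R]_q)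
  (y0 : R -> R) (y : R -> 'rV[R]_n) (beta : R -> R)
  (p0 : R) (p : R -> 'rV[R]_n) (pi lam : R) : Prop :=
  [/\
   (0 < S /\
       measurable_fun `[0, S]%classic w0 /\ meas_vec S w /\ meas_vec S alpha /\
       ess_bounded S w0 /\ ess_bounded S w /\ ess_bounded S alpha /\
       ae_on S (fun s => 0 <= w0 s /\ Ccone (w s) /\ A (alpha s)) /\
       exists2 c : R, 0 < c & ae_on S (fun s => c <= w0 s + enorm (w s))),
   ae_on S (fun s => w0 s + enorm (w s) = 1),
   (AC_sol S y0 w0 /\
       AC_sol S y (fun s => w0 s *: f (y s) (alpha s) + gsum (y s) (w s)) /\
       AC_sol S beta (fun s => enorm (w s)) /\
       y0 0 = 0 /\ y 0 = xc /\ beta 0 = 0),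
   [/\ pi <= 0, 0 <= lam,
       ~ (p0 = 0 /\ (forall s, `[0, S]%classic s -> p s = 0) /\ lam = 0),
       exists G, boltyanski_cone T (pack (y0 S) (y S)) G /\
         exists2 gam, polar G gam &
           pack p0 (p S) = - (lam *: grad Psi (pack (y0 S) (y S))) - gam &
       ((beta S)%:E < K)%E -> pi = 0] &
   [/\ AC_sol S p (fun s =>
         - grad (fun x => Hfun x p0 (p s) pi lam (w0 s) (w s) (alpha s)) (y s)),
       ae_on S (fun s => Hfun (y s) p0 (p s) pi lam (w0 s) (w s) (alpha s)
                         = Hmax (y s) p0 (p s) pi lam) &
       forall s, `[0, S]%classic s -> Hmax (y s) p0 (p s) pi lam = 0]].

End Hamiltonians.

Arguments evec {R k} j.

From Pilot Require Import Defs.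
From HB Require Import structures.
From mathcomp Require Import all_boot all_order all_algebra.
From mathcomp Require Import all_classical all_reals all_analysis.
From mathcomp Require Import ring lra.
Import Order.TTheory GRing.Theory Num.Theory numFieldNormedType.Exports.
Local Open Scope classical_set_scope.
Local Open Scope ring_scope.

Set Implicit Arguments. Unset Strict Implicit. Unset Printing Implicit Defensive.

(* By homogeneity of l1, the recession function l1hat(x, w0, w) is l1(x, w) on
   R_+ x C, so H(w0, w, a) = w0 D(a) + J(w), where D is the drift integrand and
   J(w) = |w| I(w / |w|) with I the impulsive integrand.  On W (w0 + |w| = 1)
   this is a convex combination of a value of D and a value of I, whence
   max_W H = max(H^dr, H^imp).  Along the extremal H attains this maximum a.e.
   and the maximum vanishes; since w0 D(a) <= 0 and J(w) <= 0, both vanish. *)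

Section Euclidean.
Variables (R : realType) (k : nat).
Implicit Types (u v : 'rV[R]_k).

Lemma dotpDr u v v' : dotp u (v + v') = dotp u v + dotp u v'.
Proof. by rewrite /dotp -big_split; apply: eq_bigr => i _; rewrite mxE mulrDr. Qed.

Lemma dotpZr u v r : dotp u (r *: v) = r * dotp u v.
Proof. by rewrite /dotp mulr_sumr; apply: eq_bigr => i _; rewrite mxE mulrCA. Qed.

Lemma dotp0r u : dotp u 0 = 0.
Proof. by rewrite -(scale0r 0) dotpZr mul0r. Qed.

Lemma dotpp_ge0 v : 0 <= dotp v v.
Proof. by apply: sumr_ge0 => i _; rewrite -expr2 sqr_ge0. Qed.

Lemma enorm_ge0 v : 0 <= enorm v.
Proof. exact: sqrtr_ge0. Qed.

Lemma enorm0 : enorm (0 : 'rV[R]_k) = 0.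
Proof. by rewrite /enorm dotp0r sqrtr0. Qed.

Lemma enormZ v r : 0 <= r -> enorm (r *: v) = r * enorm v.
Proof.
move=> r_ge0; rewrite /enorm; have -> : dotp (r *: v) (r *: v) = r ^+ 2 * dotp v v.
  by rewrite /dotp mulr_sumr; apply: eq_bigr => i _; rewrite !mxE expr2; ring.
by rewrite sqrtrM ?sqr_ge0 // sqrtr_sqr ger0_norm.
Qed.

Lemma enorm_gt0 v : v != 0 -> 0 < enorm v.
Proof.
move=> v_neq0; rewrite sqrtr_gt0 lt_neqAle dotpp_ge0 andbT eq_sym.
have sqr_entry_ge0 (j : 'I_k) : 0 <= v 0 j * v 0 j by rewrite -expr2 sqr_ge0.
apply: contra v_neq0 => /eqP v2_eq0; apply/eqP/rowP => i; apply/eqP.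
by rewrite mxE -sqrf_eq0 expr2 (psumr_eq0P (fun j _ => sqr_entry_ge0 j) v2_eq0).
Qed.

Lemma entry_le_norm v i : `|v 0 i| <= `|v|.
Proof. by rewrite [leRHS]/Num.norm /= mx_normrE; apply/bigmax_geP; right; exists (0, i). Qed.

Lemma norm_le_enorm v : `|v| <= enorm v.
Proof.
rewrite [leLHS]/Num.norm /= mx_normrE; apply: bigmax_le => [|[i j] _]; first exact: enorm_ge0.
rewrite ord1 /= /enorm -sqrtr_sqr ler_sqrt ?dotpp_ge0 // /dotp (bigD1 j) //= -expr2 lerDl.
by apply: sumr_ge0 => l _; rewrite -expr2 sqr_ge0.
Qed.

Lemma dotp_le_norm u v : dotp u v <= (\sum_i `|u 0 i|) * `|v|.
Proof.
rewrite mulr_suml; apply: ler_sum => i _; apply: le_trans (ler_norm _) _.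
by rewrite normrM ler_wpM2l ?entry_le_norm.
Qed.

End Euclidean.

Section ControlFields.
Variables (R : realType) (n m1 m2 : nat).
Variables (g : 'I_(m1 + m2) -> 'rV[R]_n -> 'rV[R]_n) (x : 'rV[R]_n).

Lemma gsumZ r w : gsum g x (r *: w) = r *: gsum g x w.
Proof. by rewrite /gsum scaler_sumr; apply: eq_bigr => i _; rewrite mxE scalerA. Qed.

Lemma gsum0 : gsum g x 0 = 0.
Proof. by rewrite -(scale0r 0) gsumZ scale0r. Qed.

Lemma dotp_gsum P w : dotp P (gsum g x w) = dotp (\row_i dotp P (g i x)) w.
Proof.
rewrite /dotp /gsum.
under eq_bigr => j _ do rewrite summxE mulr_sumr.
rewrite exchange_big; apply: eq_bigr => i _; rewrite mxE mulr_suml.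
by apply: eq_bigr => j _; rewrite mxE mulrCA mulrC.
Qed.

End ControlFields.

Section ProductCone.
Variables (R : realType) (m1 m2 : nat) (C1 : set 'rV[R]_m1) (C2 : set 'rV[R]_m2).

Lemma Ccone_is_cone : is_cone C1 -> is_cone C2 -> is_cone (Ccone C1 C2).
Proof.
move=> [C1_0 C1Z] [C2_0 C2Z]; split; first by split; rewrite linear0.
by move=> r w r_ge0 [C1w C2w]; split; rewrite linearZ; [exact: C1Z | exact: C2Z].
Qed.

Lemma closed_Ccone : closed C1 -> closed C2 -> closed (Ccone C1 C2).
Proof.
move=> cC1 cC2; apply: closedI; apply: preimage_closed => // w _.
  exact: continuous_lsubmx.
exact: continuous_rsubmx.
Qed.

End ProductCone.

Lemma compactI_unit_ball (R : realType) k (C : set 'rV[R]_k) :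
  closed C -> compact (C `&` [set v | `|v| <= 1]).
Proof.
move=> cC; apply: bounded_closed_compact.
  exists 1; split; first exact: num_real.
  by move=> M M_gt1 v [_ v_le1]; exact: le_trans v_le1 (ltW M_gt1).
apply: closedI cC _.
apply: (@preimage_closed _ _ (Num.norm : 'rV[R]_k -> R) [set r : R | r <= 1]).
  by move=> v _; exact: norm_continuous.
exact: closed_le.
Qed.

Lemma within_gt0_cvg_cst (R : realType) (F : R -> R) (t c L : R) : 0 <= t ->
  (forall r, 0 < r -> F r = c) ->
  F @ within [set r : R | 0 < r] t^' --> L -> L = c.
Proof.
move=> t_ge0 F_cst FL.
have finer : t^'+ `=>` within [set r : R | 0 < r] t^'.
  move=> B tB; apply: filterS (tB : nbhs t (fun r => r != t -> 0 < r -> B r)).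
  by move=> r Br tr; apply: Br; [rewrite gt_eqF | exact: le_lt_trans tr].
have FL_right : F @ t^'+ --> L := cvg_trans (cvg_app F finer) FL.
have Fc_right : F @ t^'+ --> c.
  apply: cvg_trans (near_eq_cvg _) (cvg_cst c).
  by near=> r; rewrite F_cst //; apply: le_lt_trans t_ge0 _; near: r; exact: nbhs_right_gt.
exact: cvg_unique FL_right Fc_right.
Unshelve. all: by end_near.
Qed.

Lemma homogeneous_recessionE (R : realType) k (C : set 'rV[R]_k)
    (l : 'rV[R]_k -> R) (lhat : R -> 'rV[R]_k -> R) (t : R) w :
  (forall r v, 0 < r -> C v -> l (r *: v) = r * l v) -> 0 <= t -> C w ->
  (fun r => r * l (r^-1 *: w)) @ within [set r : R | 0 < r] t^' --> lhat t w ->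
  lhat t w = l w.
Proof.
move=> l_hom t_ge0 Cw; apply: within_gt0_cvg_cst t_ge0 _ => r r_gt0.
by rewrite l_hom ?invr_gt0 // mulrA mulfV ?gt_eqF // mul1r.
Qed.

Lemma continuous_slice_bounded (R : realType) (X Y : topologicalType)
    (V : normedModType R) (E : set (X * Y)) (B : set Y) (h : X -> Y -> V) (x : X) :
  compact B -> (forall y, B y -> E (x, y)) ->
  {within E, continuous (fun z => h z.1 z.2)} ->
  exists M, forall y, B y -> `|h x y| <= M.
Proof.
move=> cB BE h_cont.
have xBE : [set x] `*` B `<=` E by move=> [_ y] [/= -> /BE].
have cxB : compact ([set x] `*` B) := compact_setX (@compact_set1 _ x) cB.
have /compact_bounded [M [_ hM]] := continuous_compact (continuous_subspaceW xBE h_cont) cxB.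
by exists (M + 1) => y By; apply: hM; [lra | exists (x, y)].
Qed.

Lemma drift_bounded (R : realType) n q (A : set 'rV[R]_q)
    (f : 'rV[R]_n -> 'rV[R]_q -> 'rV[R]_n) (l0 : 'rV[R]_n -> 'rV[R]_q -> R)
    x p0 P lam :
  compact A ->
  {within [set z : 'rV[R]_n * 'rV[R]_q | A z.2], continuous (fun z => f z.1 z.2)} ->
  {within [set z : 'rV[R]_n * 'rV[R]_q | A z.2], continuous (fun z => l0 z.1 z.2)} ->
  exists M, forall a, A a -> p0 + dotp P (f x a) - lam * l0 x a <= M.
Proof.
move=> cA f_cont l0_cont.
have [Mf f_le] := continuous_slice_bounded (x := x) cA (fun _ Aa => Aa) f_cont.
have [Ml l0_le] := continuous_slice_bounded (x := x) cA (fun _ Aa => Aa) l0_cont.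
exists (`|p0| + (\sum_i `|P 0 i|) * Mf + `|lam| * Ml) => a Aa.
have p0_le := ler_norm p0.
have dotp_le : dotp P (f x a) <= (\sum_i `|P 0 i|) * Mf.
  apply: le_trans (dotp_le_norm _ _) _.
  by rewrite ler_wpM2l ?f_le //; apply: sumr_ge0.
have l0_term_le : - (lam * l0 x a) <= `|lam| * Ml.
  by apply: le_trans (ler_norm _) _; rewrite normrN normrM ler_wpM2l ?l0_le.
lra.
Qed.

Lemma impulse_bounded (R : realType) n m1 m2 (C1 : set 'rV[R]_m1) (C2 : set 'rV[R]_m2)
    (g : 'I_(m1 + m2) -> 'rV[R]_n -> 'rV[R]_n) (l1 : 'rV[R]_n -> 'rV[R]_(m1 + m2) -> R)
    (l1hat : 'rV[R]_n -> R -> 'rV[R]_(m1 + m2) -> R) x P pi lam :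
  closed C1 -> closed C2 ->
  {within [set z : 'rV[R]_n * (R * 'rV[R]_(m1 + m2)) | 0 <= z.2.1 /\ Ccone C1 C2 z.2.2],
     continuous (fun z => l1hat z.1 z.2.1 z.2.2)} ->
  (forall v, Ccone C1 C2 v -> l1hat x 1 v = l1 x v) ->
  exists M, forall v, Ccone C1 C2 v -> enorm v = 1 ->
    dotp P (gsum g x v) + pi - lam * l1 x v <= M.
Proof.
move=> cC1 cC2 l1hat_cont l1hatE.
set B := Ccone C1 C2 `&` [set v | `|v| <= 1].
have cB : compact ([set 1 : R] `*` B).
  exact: compact_setX (@compact_set1 _ _) (compactI_unit_ball (closed_Ccone cC1 cC2)).
have BE : forall z, ([set 1 : R] `*` B) z -> 0 <= z.1 /\ Ccone C1 C2 z.2.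
  by move=> [_ v] [/= -> [Cv _]].
have [Ml l1_le] := continuous_slice_bounded
  (h := fun x z => l1hat x z.1 z.2) (x := x) cB BE l1hat_cont.
exists (\sum_i `|dotp P (g i x)| + pi + `|lam| * Ml) => v Cv v_unit.
have v_le1 : `|v| <= 1 by rewrite -v_unit norm_le_enorm.
have dotp_le : dotp P (gsum g x v) <= \sum_i `|dotp P (g i x)|.
  rewrite dotp_gsum; apply: le_trans (dotp_le_norm _ _) _.
  under eq_bigr do rewrite mxE.
  by apply: ler_piMr => //; exact: sumr_ge0.
have l1_term_le : - (lam * l1 x v) <= `|lam| * Ml.
  apply: le_trans (ler_norm _) _; rewrite normrN normrM ler_wpM2l // -l1hatE //.
  by apply: (l1_le (1, v)).
lra.
Qed.

Section HamiltonianSplitting.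
Variables (R : realType) (n m1 m2 q : nat).
Local Notation m := (m1 + m2)%N.
Variables (C1 : set 'rV[R]_m1) (C2 : set 'rV[R]_m2) (A : set 'rV[R]_q).
Variables (f : 'rV[R]_n -> 'rV[R]_q -> 'rV[R]_n) (g : 'I_m -> 'rV[R]_n -> 'rV[R]_n)
  (l0 : 'rV[R]_n -> 'rV[R]_q -> R) (l1 : 'rV[R]_n -> 'rV[R]_m -> R)
  (l1hat : 'rV[R]_n -> R -> 'rV[R]_m -> R).
Variables (x : 'rV[R]_n) (p0 : R) (P : 'rV[R]_n) (pi lam : R).

Local Notation C := (Ccone C1 C2).
Local Notation H := (Hfun f g l0 l1hat x p0 P pi lam).
Local Notation bH := (Hmax C1 C2 A f g l0 l1hat x p0 P pi lam).
Local Notation Hd := (Hdr A f l0 x p0 P lam).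
Local Notation Hi := (Himp C1 C2 g l1 x P pi lam).
Local Notation drift a := (p0 + dotp P (f x a) - lam * l0 x a).
Local Notation impulse v := (dotp P (gsum g x v) + pi - lam * l1 x v).
Local Notation impulse_part w := (dotp P (gsum g x w) + pi * enorm w - lam * l1 x w).

Hypotheses (C1_cone : is_cone C1) (C2_cone : is_cone C2).
Hypothesis l1hatE : forall w0 w, 0 <= w0 -> C w -> l1hat x w0 w = l1 x w.
Hypothesis l1_hom : forall r w, 0 < r -> C w -> l1 x (r *: w) = r * l1 x w.
(* [sup] is 0 on sets that are not bounded above: these bounds make [Hd], [Hi]
   and [bH] genuine suprema. *)
Hypothesis drift_ub : exists M, forall a, A a -> drift a <= M.
Hypothesis impulse_ub : exists M, forall v, C v -> enorm v = 1 -> impulse v <= M.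

Let C_cone : is_cone C := Ccone_is_cone C1_cone C2_cone.

Lemma l1_at0 : l1 x 0 = 0.
Proof. by have := @l1_hom 2 0 (ltr0Sn _ 1) C_cone.1; rewrite scaler0; lra. Qed.

Lemma Hfun_split w0 w a : 0 <= w0 -> C w -> H w0 w a = w0 * drift a + impulse_part w.
Proof. by move=> w0_ge0 Cw; rewrite /Hfun /Defs.le l1hatE // dotpDr dotpZr; ring. Qed.

Lemma impulse_part_le M : (forall v, C v -> enorm v = 1 -> impulse v <= M) ->
  forall w, C w -> impulse_part w <= enorm w * M.
Proof.
move=> impulse_le w Cw; have [->|w_neq0] := eqVneq w 0.
  by rewrite gsum0 dotp0r enorm0 l1_at0; lra.
have r_gt0 := enorm_gt0 w_neq0; set r := enorm w in r_gt0 *.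
have wE : w = r *: (r^-1 *: w) by rewrite scalerA divff ?scale1r // gt_eqF.
have Cv : C (r^-1 *: w) by apply: C_cone.2 => //; rewrite invr_ge0 ltW.
have v_unit : enorm (r^-1 *: w) = 1 by rewrite enormZ ?invr_ge0 ?ltW // mulVf ?gt_eqF.
rewrite {1 2}wE gsumZ dotpZr l1_hom //.
have := impulse_le _ Cv v_unit; rewrite -subr_ge0 => /(mulr_ge0 (ltW r_gt0)).
lra.
Qed.

Lemma Hfun_le_max M1 M2 z a : Wset C1 C2 z -> A a -> drift a <= M1 ->
  (forall v, C v -> enorm v = 1 -> impulse v <= M2) ->
  H z.1 z.2 a <= Num.max M1 M2.
Proof.
move=> [z1_ge0 [Cz2 z_sum]] Aa drift_le impulse_le; rewrite Hfun_split //.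
have drift_term : z.1 * drift a <= z.1 * Num.max M1 M2.
  by rewrite ler_wpM2l // (le_trans drift_le) // le_max lexx.
have impulse_term : impulse_part z.2 <= enorm z.2 * Num.max M1 M2.
  apply: impulse_part_le Cz2 => v Cv v_unit.
  by rewrite (le_trans (impulse_le v Cv v_unit)) // le_max lexx orbT.
by apply: le_trans (lerD drift_term impulse_term) _; rewrite -mulrDl z_sum mul1r.
Qed.

Lemma drift_le_Hdr a : A a -> drift a <= Hd.
Proof.
move=> Aa; apply: ub_le_sup; last by exists a.
by have [M drift_le] := drift_ub; exists M => _ [b [Ab ->]]; exact: drift_le.
Qed.

Lemma impulse_le_Himp v : C v -> enorm v = 1 -> impulse v <= Hi.
Proof.
move=> Cv v_unit; apply: ub_le_sup; last by exists v.
by have [M impulse_le] := impulse_ub; exists M => _ [u [Cu [u_unit ->]]]; exact: impulse_le.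
Qed.

Lemma Hfun_le_Hmax z a : Wset C1 C2 z -> A a -> H z.1 z.2 a <= bH.
Proof.
move=> Wz Aa; apply: ub_le_sup; last by exists z, a.
have [MD drift_le] := drift_ub; have [MI impulse_le] := impulse_ub.
exists (Num.max MD MI) => _ [z' [a' [Wz' [Aa' ->]]]].
exact: Hfun_le_max (drift_le _ Aa') impulse_le.
Qed.

Lemma Wset_drift : Wset C1 C2 (1, 0).
Proof. by split => //=; split; [exact: C_cone.1 | rewrite enorm0 addr0]. Qed.

Lemma Wset_impulse v : C v -> enorm v = 1 -> Wset C1 C2 (0, v).
Proof. by move=> Cv v_unit; split => //=; split => //; rewrite v_unit add0r. Qed.

Lemma Hmax_le_max a : A a -> bH <= Num.max Hd Hi.
Proof.
move=> Aa; apply: ge_sup; first by exists (H 1 0 a), (1, 0), a; split => //; exact: Wset_drift.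
move=> _ [z [b [Wz [Ab ->]]]].
exact: Hfun_le_max (drift_le_Hdr Ab) impulse_le_Himp.
Qed.

Lemma Hdr_le_Hmax a : A a -> Hd <= bH.
Proof.
move=> Aa; apply: ge_sup; first by exists (drift a), a.
move=> _ [b [Ab ->]]; have := Hfun_le_Hmax Wset_drift Ab.
by rewrite Hfun_split //= ?gsum0 ?dotp0r ?enorm0 ?l1_at0; [lra | exact: C_cone.1].
Qed.

(* If C has no unit vector, [Hi] is [sup set0 = 0]; hence the hypothesis. *)
Lemma Himp_le_Hmax a : A a -> 0 <= bH -> Hi <= bH.
Proof.
move=> Aa Hmax_ge0; rewrite [Hi]/Himp; set E := [set h | _].
have [->|/set0P E_neq0] := eqVneq E set0; first by rewrite sup0.
apply: ge_sup => // _ [v [Cv [v_unit ->]]].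
have := Hfun_le_Hmax (Wset_impulse Cv v_unit) Aa.
by rewrite Hfun_split //= v_unit mul0r add0r mulr1.
Qed.

Lemma Hmax_max a : A a -> 0 <= bH -> bH = Num.max Hd Hi.
Proof.
move=> Aa Hmax_ge0; apply/le_anti; rewrite (Hmax_le_max Aa) /=.
by rewrite ge_max (Hdr_le_Hmax Aa) (Himp_le_Hmax Aa).
Qed.

Lemma maximum_principle_splitting w0 w a :
  0 <= w0 -> C w -> A a -> w0 + enorm w = 1 -> H w0 w a = bH -> bH = 0 ->
  [/\ H w0 w a = bH, bH = Num.max Hd Hi, Num.max Hd Hi = 0,
      w0 * drift a = 0
    & [/\ impulse_part w = 0,
          Hd < 0 -> [/\ w0 = 0, impulse w = Hi & Hi = 0] &
          Hi < 0 -> [/\ w = 0, drift a = Hd & Hd = 0]]].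
Proof.
move=> w0_ge0 Cw Aa w_sum H_opt Hmax0.
have Hmax_maxE : bH = Num.max Hd Hi by rewrite (Hmax_max Aa) ?Hmax0.
have Hdr_le0 : Hd <= 0 by rewrite -Hmax0 (Hdr_le_Hmax Aa).
have Himp_le0 : Hi <= 0 by rewrite -Hmax0 (Himp_le_Hmax Aa) ?Hmax0.
have drift_le0 : drift a <= 0 := le_trans (drift_le_Hdr Aa) Hdr_le0.
have impulse_part_le0 : impulse_part w <= 0.
  apply: le_trans (impulse_part_le impulse_le_Himp Cw) _.
  exact: mulr_ge0_le0 (enorm_ge0 _) Himp_le0.
have sum0 : w0 * drift a + impulse_part w = 0 by rewrite -Hfun_split // H_opt.
have drift_term0 : w0 * drift a = 0.
  by have := mulr_ge0_le0 w0_ge0 drift_le0; lra.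
have impulse_part0 : impulse_part w = 0 by lra.
split => //; first by rewrite -Hmax_maxE.
split => // [Hdr_lt0 | Himp_lt0].
- have w0_eq0 : w0 = 0.
    apply/eqP; move/eqP: drift_term0; rewrite mulf_eq0 => /orP[//|/eqP drift0].
    by move: Hdr_lt0; rewrite ltNge -drift0 (drift_le_Hdr Aa).
  have w_unit : enorm w = 1 by rewrite -w_sum w0_eq0 add0r.
  have impulse0 : impulse w = 0 by move: impulse_part0; rewrite w_unit mulr1.
  have Himp0 : Hi = 0 by apply/le_anti; rewrite Himp_le0 -impulse0 impulse_le_Himp.
  by rewrite impulse0 Himp0.
- have w_eq0 : w = 0.
    apply/eqP/negPn/negP => w_neq0.
    have := impulse_part_le impulse_le_Himp Cw; rewrite impulse_part0.
    by rewrite leNgt pmulr_rlt0 ?enorm_gt0 ?Himp_lt0.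
  have w0_eq1 : w0 = 1 by rewrite -w_sum w_eq0 enorm0 addr0.
  have drift0 : drift a = 0 by move: drift_term0; rewrite w0_eq1 mul1r.
  have Hdr0 : Hd = 0 by apply/le_anti; rewrite Hdr_le0 -drift0 drift_le_Hdr.
  by rewrite drift0 Hdr0.
Qed.

End HamiltonianSplitting.

Section AlmostEverywhere.
Variables (R : realType) (S : R).
Implicit Types (P Q : R -> Prop).

Lemma ae_onI P Q : ae_on S P -> ae_on S Q -> ae_on S (fun s => P s /\ Q s).
Proof.
move=> [N1 [[mN1 N1_0] PN1]] [N2 [[mN2 N2_0] QN2]].
exists (N1 `|` N2); split; first by split; [exact: measurableU | exact: null_set_setU].
by move=> s Is Ns; split; [apply: PN1 | apply: QN2] => // N_s; apply: Ns; [left | right].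
Qed.

Lemma ae_on_null_in_itv P : ae_on S P ->
  exists N, leb_null N /\ N `<=` `[0, S]%classic /\
    forall s, `[0, S]%classic s -> ~ N s -> P s.
Proof.
move=> [N [[mN N0] PN]]; exists (`[0, S]%classic `&` N); split; last split.
- split; first exact: measurableI.
  apply/eqP; rewrite eq_le measure_ge0 andbT -N0 le_measure ?inE //.
  exact: measurableI.
- exact: subIsetl.
- by move=> s Is Ns; apply: PN => // N_s; apply: Ns.
Qed.

End AlmostEverywhere.

Theorem mainTheorem2 (R : realType) (n m1 m2 q : nat)
  (* standing hypotheses *)
  (Hn : (0 < n)%N) (Hm : (0 < m1 + m2)%N) (Hq : (0 < q)%N)
  (T : set 'rV[R]_(1 + n))
  (HTcl : closed T) (HTpos : forall z, T z -> exists t x, 0 <= t /\ z = pack t x)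
  (A : set 'rV[R]_q) (HAc : compact A)
  (C1 : set 'rV[R]_m1) (C2 : set 'rV[R]_m2)
  (HC1 : closed C1 /\ is_cone C1 /\ forall (i : 'I_m1) (r : R), C1 (r *: evec i))
  (HC2 : closed C2 /\ is_cone C2 /\
         forall v : 'rV[R]_m2, (forall r : R, C2 (r *: v)) -> v = 0)
  (f : 'rV[R]_n -> 'rV[R]_q -> 'rV[R]_n)
  (Hf : {within [set z : 'rV[R]_n * 'rV[R]_q | A z.2],
           continuous (fun z => f z.1 z.2)} /\
        cont_xpartials [set z : 'rV[R]_n * 'rV[R]_q | A z.2] f)
  (g : 'I_(m1 + m2) -> 'rV[R]_n -> 'rV[R]_n) (Hg : forall i, C1fun (g i))
  (l0 : 'rV[R]_n -> 'rV[R]_q -> R)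
  (Hl0 : {within [set z : 'rV[R]_n * 'rV[R]_q | A z.2],
            continuous (fun z => l0 z.1 z.2)} /\
         cont_xpartials [set z : 'rV[R]_n * 'rV[R]_q | A z.2] l0)
  (l1 : 'rV[R]_n -> 'rV[R]_(m1 + m2) -> R)
  (l1hat : 'rV[R]_n -> R -> 'rV[R]_(m1 + m2) -> R)
  (Hl1hat_lim : forall x (w0 : R) w, 0 <= w0 -> Ccone C1 C2 w ->
      (fun r => r * l1 x (r^-1 *: w)) @ within [set r : R | 0 < r] (w0^')
        --> l1hat x w0 w)
  (Hl1hat : {within [set z : 'rV[R]_n * (R * 'rV[R]_(m1 + m2)) |
                      0 <= z.2.1 /\ Ccone C1 C2 z.2.2],
               continuous (fun z => l1hat z.1 z.2.1 z.2.2)} /\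
            cont_xpartials [set z : 'rV[R]_n * (R * 'rV[R]_(m1 + m2)) |
                              0 <= z.2.1 /\ Ccone C1 C2 z.2.2]
              (fun x y => l1hat x y.1 y.2))
  (Psi : 'rV[R]_(1 + n) -> R) (HPsi : C1fun Psi)
  (K : \bar R) (HK : (0 < K)%E) (xc : 'rV[R]_n)
  (* l1(x,.) positively 1-homogeneous *)
  (Hhom : forall x (r : R) w, 0 < r -> Ccone C1 C2 w -> l1 x (r *: w) = r * l1 x w)
  (* the canonical extremal and its multiplier *)
  (S : R) (w0 : R -> R) (w : R -> 'rV[R]_(m1 + m2)) (alpha : R -> 'rV[R]_q)
  (y0 : R -> R) (y : R -> 'rV[R]_n) (beta : R -> R)
  (p0 : R) (p : R -> 'rV[R]_n) (pi lam : R)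
  (Hext : canonical_extremal C1 C2 A f g l0 l1hat T Psi K xc
            S w0 w alpha y0 y beta p0 p pi lam) :
  exists N : set R, leb_null N /\ N `<=` `[0, S]%classic /\
    forall s, `[0, S]%classic s -> ~ N s ->
    [/\ Hfun f g l0 l1hat (y s) p0 (p s) pi lam (w0 s) (w s) (alpha s)
          = Hmax C1 C2 A f g l0 l1hat (y s) p0 (p s) pi lam,
        Hmax C1 C2 A f g l0 l1hat (y s) p0 (p s) pi lam
          = Num.max (Hdr A f l0 (y s) p0 (p s) lam)
                    (Himp C1 C2 g l1 (y s) (p s) pi lam),
        Num.max (Hdr A f l0 (y s) p0 (p s) lam)
                (Himp C1 C2 g l1 (y s) (p s) pi lam) = 0,
        w0 s * (p0 + dotp (p s) (f (y s) (alpha s)) - lam * l0 (y s) (alpha s)) = 0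
      & [/\ dotp (p s) (gsum g (y s) (w s)) + pi * enorm (w s)
              - lam * l1 (y s) (w s) = 0,
            (Hdr A f l0 (y s) p0 (p s) lam < 0 ->
               [/\ w0 s = 0,
                   dotp (p s) (gsum g (y s) (w s)) + pi - lam * l1 (y s) (w s)
                     = Himp C1 C2 g l1 (y s) (p s) pi lam &
                   Himp C1 C2 g l1 (y s) (p s) pi lam = 0]) &
            (Himp C1 C2 g l1 (y s) (p s) pi lam < 0 ->
               [/\ w s = 0,
                   p0 + dotp (p s) (f (y s) (alpha s)) - lam * l0 (y s) (alpha s)
                     = Hdr A f l0 (y s) p0 (p s) lam &
                   Hdr A f l0 (y s) p0 (p s) lam = 0])]].
Proof.
case: Hext => [[_ [_ [_ [_ [_ [_ [_ [ae_adm _]]]]]]]] ae_canon _ _ [_ ae_opt Hmax0]].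
have [N [N_null [N_sub HN]]] :=
  ae_on_null_in_itv (ae_onI ae_adm (ae_onI ae_canon ae_opt)).
exists N; split => //; split => // s Is Ns.
have [[w0_ge0 [Cw Aa]] [w_sum H_opt]] := HN s Is Ns.
have [[cC1 [C1_cone _]] [cC2 [C2_cone _]]] := (HC1, HC2).
have l1hatE w0' w' : 0 <= w0' -> Ccone C1 C2 w' -> l1hat (y s) w0' w' = l1 (y s) w'.
  move=> w0'_ge0 Cw'.
  exact: homogeneous_recessionE (Hhom (y s)) w0'_ge0 Cw'
    (Hl1hat_lim (y s) w0' w' w0'_ge0 Cw').
apply: maximum_principle_splitting => //.
- exact: Hhom.
- exact: drift_bounded HAc Hf.1 Hl0.1.
- by apply: impulse_bounded cC1 cC2 Hl1hat.1 _ => v Cv; exact: l1hatE.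
- exact: Hmax0.
Qed.
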